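(* Let $\mu\in\mathbb{R}$ and $\nu>0$ be constants, and let $G$ be one of the functions $$G_1(t)=\frac{1+(t/2+\mu)^2}{1+(t+\mu)^2},\qquad G_2(t)=\frac{(t/2+\nu)^2}{(t+\nu)^2}.$$ Let $\alpha\in(\frac12,1)$. If $t>0$ and $G(t)\ge\alpha$, then $G(t')>\alpha$ for every $0<t'<t$. *)

From Stdlib Require Import Reals Lra.
Open Scope R_scope.

Definition G1 (mu t : R) : R := (1 + (t/2 + mu)^2) / (1 + (t + mu)^2).
Definition G2 (nu t : R) : R := (t/2 + nu)^2 / (t + nu)^2.

Definition level_prop (G : R -> R) : Prop :=
  forall alpha : R, 1/2 < alpha < 1 ->
  forall t : R, 0 < t -> G t >= alpha ->
  forall t' : R, 0 < t' < t -> G t' > alpha.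

(** Both [G1] and [G2] have the form
    [(c + (t/2 + m)^2) / (c + (t + m)^2)] with [c = 1] or [c = 0].  For
    [1/2 < alpha < 1], numerator minus [alpha] times denominator is a
    quadratic in [t] with leading coefficient [1/4 - alpha < 0] and value
    [(1 - alpha)(c + m^2) > 0] at [t = 0]; a concave function that is positive
    at [0] and nonnegative at [t] is positive strictly between them. *)

From Stdlib Require Import Reals Lra.
Open Scope R_scope.

Lemma ratio_ge_iff (alpha n d : R) :
  0 < d -> alpha <= n / d <-> 0 <= n - alpha * d.
Proof.
  intro hd.
  assert (hn : n = n / d * d) by (field; lra).
  split; intro h; [rewrite hn at 1 |]; nra.
Qed.

Lemma ratio_gt_iff (alpha n d : R) :
  0 < d -> alpha < n / d <-> 0 < n - alpha * d.
Proof.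
  intro hd.
  assert (hn : n = n / d * d) by (field; lra).
  split; intro h; [rewrite hn at 1 |]; nra.
Qed.

Lemma concave_quadratic_pos_between (a b c t s : R) :
  a < 0 -> 0 < c -> 0 <= a * t ^ 2 + b * t + c -> 0 < s < t ->
  0 < a * s ^ 2 + b * s + c.
Proof.
  intros ha hc ht [hs hst].
  assert (interpolation : t * (a * s ^ 2 + b * s + c) =
    (t - s) * c + s * (a * t ^ 2 + b * t + c) - a * t * s * (t - s)) by ring.
  assert (0 < t * (a * s ^ 2 + b * s + c)).
  { rewrite interpolation.
    assert (0 < - a * t * s * (t - s)) by (repeat apply Rmult_lt_0_compat; lra).
    nra. }
  nra.
Qed.

Definition shifted_ratio (c m t : R) : R := (c + (t / 2 + m) ^ 2) / (c + (t + m) ^ 2).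

Lemma level_prop_shifted_ratio (c m : R) :
  0 <= c -> 0 < c \/ 0 < m -> level_prop (shifted_ratio c m).
Proof.
  intros hc hcm alpha [ha1 ha2] t ht hGt s [hs hst].
  assert (den_pos : forall x, 0 < x -> 0 < c + (x + m) ^ 2).
  { intros x hx; destruct hcm.
    - pose proof (pow2_ge_0 (x + m)); lra.
    - pose proof (pow_lt (x + m) 2); lra. }
  assert (quadratic : forall x, c + (x / 2 + m) ^ 2 - alpha * (c + (x + m) ^ 2) =
    (1 / 4 - alpha) * x ^ 2 + (1 - 2 * alpha) * m * x + (1 - alpha) * (c + m ^ 2))
    by (intro; field).
  unfold shifted_ratio in *.
  apply Rge_le, ratio_ge_iff in hGt; [|exact (den_pos t ht)].
  apply Rlt_gt, ratio_gt_iff; [exact (den_pos s hs)|].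
  rewrite quadratic in *.
  apply (concave_quadratic_pos_between _ _ _ t); [lra | | exact hGt | lra].
  apply Rmult_lt_0_compat; [lra|].
  destruct hcm; [pose proof (pow2_ge_0 m) | pose proof (pow_lt m 2)]; lra.
Qed.

Lemma level_prop_ext (F G : R -> R) :
  (forall t, F t = G t) -> level_prop F -> level_prop G.
Proof.
  intros hFG hF alpha ha t ht hGt s hs.
  rewrite <- hFG in *; exact (hF alpha ha t ht hGt s hs).
Qed.

Theorem lemma3p1 (mu nu : R) (hnu : 0 < nu) :
  level_prop (G1 mu) /\ level_prop (G2 nu).
Proof.
  split.
  - exact (level_prop_shifted_ratio 1 mu Rle_0_1 (or_introl Rlt_0_1)).
  - apply (level_prop_ext (shifted_ratio 0 nu)).
    + intro t; unfold shifted_ratio, G2; rewrite !Rplus_0_l; reflexivity.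
    + exact (level_prop_shifted_ratio 0 nu (Rle_refl 0) (or_intror hnu)).
Qed.
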